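(* Let $X$ be a real normed vector space, $Y$ a $\mathbb{Q}$-vector space, $f:X\to Y$, $s\ge1$, $\varepsilon>0$, and $B=\{x\in X:\|x\|_X<\varepsilon\}$. If $\Delta_h^sf(x)=0$ for all $x\in X$ and all $h\in B$, then $\Delta_{h_1h_2\cdots h_s}f(x)=0$ for all $(x,h_1,\dots,h_s)\in X^{s+1}$.
   Context: For $h\in X$, $\Delta_hf(x)=f(x+h)-f(x)$; $\Delta_{h_1h_2\cdots h_s}f(x)=\Delta_{h_1}\left(\Delta_{h_2\cdots h_s}f\right)(x)$ for $s\ge 2$; and $\Delta_h^sf(x)=\sum_{k=0}^s\binom{s}{k}(-1)^{s-k}f(x+kh)$. *)

From HB Require Import structures.
From mathcomp Require Import all_boot all_order all_algebra.
Set Implicit Arguments. Unset Strict Implicit. Unset Printing Implicit Defensive.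
Import Order.TTheory GRing.Theory Num.Theory.
Local Open Scope ring_scope.

Definition is_norm (R : numDomainType) (X : lmodType R) (nrm : X -> R) : Prop :=
  [/\ forall x, 0 <= nrm x,
      forall x, nrm x = 0 -> x = 0,
      forall (a : R) x, nrm (a *: x) = `|a| * nrm x
    & forall x y, nrm (x + y) <= nrm x + nrm y].

Definition Delta (X Y : zmodType) (h : X) (f : X -> Y) : X -> Y :=
  fun x => f (x + h) - f x.

Definition Deltas (X Y : zmodType) (hs : seq X) (f : X -> Y) : X -> Y :=
  foldr (fun h g => Delta h g) f hs.

Definition DeltaPow (X : zmodType) (Y : lmodType rat) (h : X) (s : nat)
    (f : X -> Y) : X -> Y :=
  fun x => \sum_(k < s.+1) (((-1 : rat) ^+ (s - k)) *: (f (x + h *+ k) *+ 'C(s, k))).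

From HB Require Import structures.
From mathcomp Require Import all_boot all_order all_algebra.
Import Order.TTheory GRing.Theory Num.Theory.
Local Open Scope ring_scope.
Set Implicit Arguments. Unset Strict Implicit.

(* Given h_1, ..., h_s of norm < eps/(s+1), consider on X * X the
   function F (y, a) = Delta_a^s f (y) = sum_k (-1)^(s-k) C(s,k) f (y + k a)
   and the directions p_i = (h_i, -h_i/i).  F vanishes when |a| < eps, and all
   points (x, 0) + (sum of some p_i) have second coordinate of norm < eps, so
   Delta_{p_1 ... p_s} F (x, 0) = 0.  Since Delta_{p_1...p_s} commutes with the
   sum and with the additive maps (y, a) |-> y + k a, this equals
   sum_k (-1)^(s-k) C(s,k) Delta_{(1-k/1)h_1 ... (1-k/s)h_s} f (x); for
   1 <= k <= s one direction is 0, so only k = 0 survives, giving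
   Delta_{h_1...h_s} f (x) = 0.

   Delta_{h_1...h_s} f is additive in each h_i, so vanishing for
   small h_i propagates to h_i = N (h_i / N) for every N; by the Archimedean
   property every vector is of that form, one slot at a time. *)

Section DifferenceCalculus.
Variables (X Y : zmodType).
Implicit Types (g : X -> Y) (hs : seq X) (x h : X).

Lemma Deltas_cons h hs g x :
  Deltas (h :: hs) g x = Deltas hs g (x + h) - Deltas hs g x.
Proof. by []. Qed.

Lemma Deltas_eq0_mem hs g x : 0 \in hs -> Deltas hs g x = 0.
Proof.
elim: hs x => [|h hs IH] x //; rewrite in_cons Deltas_cons => /orP[/eqP <-|hs0].
  by rewrite addr0 subrr.
by rewrite !IH // subrr.
Qed.

Lemma Deltas_sum n (G : 'I_n -> X -> Y) hs x :
  Deltas hs (fun z => \sum_(k < n) G k z) x = \sum_(k < n) Deltas hs (G k) x.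
Proof. by elim: hs x => [|h hs IH] x //; rewrite Deltas_cons !IH sumrB. Qed.

Lemma Deltas_morph (Y' : zmodType) (psi : Y -> Y') hs g x :
  {morph psi : u v / u - v} -> Deltas hs (fun z => psi (g z)) x = psi (Deltas hs g x).
Proof.
by move=> psiB; elim: hs x => [|h hs IH] x //=; rewrite /Delta !IH psiB.
Qed.

Lemma Deltas_comp (Z : zmodType) (phi : Z -> X) (ps : seq Z) g (z : Z) :
  {morph phi : u v / u + v} ->
  Deltas ps (fun w => g (phi w)) z = Deltas (map phi ps) g (phi z).
Proof.
by move=> phiD; elim: ps z => [|p ps IH] z //=; rewrite /Delta !IH phiD.
Qed.

Lemma Deltas_splitD hs1 hs2 a b g x :
  Deltas (hs1 ++ (a + b) :: hs2) g x =
  Deltas (hs1 ++ a :: hs2) g (x + b) + Deltas (hs1 ++ b :: hs2) g x.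
Proof.
elim: hs1 x => [|c hs1 IH] x /=.
  by rewrite /Delta (addrC a) addrA [RHS]addrA subrK.
by rewrite /Delta !IH (addrAC x c b) opprD addrACA.
Qed.

Lemma Deltas_mulrn hs1 hs2 u g :
  (forall x, Deltas (hs1 ++ u :: hs2) g x = 0) ->
  forall N x, Deltas (hs1 ++ u *+ N :: hs2) g x = 0.
Proof.
move=> vanish_u; elim=> [|N IH] x.
  by rewrite mulr0n Deltas_eq0_mem // mem_cat in_cons eqxx orbT.
by rewrite mulrS Deltas_splitD vanish_u IH addr0.
Qed.

End DifferenceCalculus.

Lemma Deltas_eq0_near (R : numDomainType) (Z Y : zmodType) (mu : Z -> R)
    (g : Z -> Y) (eps d : R) :
  (forall z, 0 <= mu z) -> (forall z w, mu (z + w) <= mu z + mu w) ->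
  (forall z, mu z < eps -> g z = 0) ->
  forall ps z, {in ps, forall p, mu p <= d} -> mu z + (size ps)%:R * d < eps ->
  Deltas ps g z = 0.
Proof.
move=> mu_ge0 mu_subadd g0; elim=> [|p ps IH] z ps_small /=.
  by rewrite mul0r addr0 => /g0.
rewrite mulrSr mulrDl mul1r addrA => near_z.
have mup_le : mu p <= d by apply: ps_small; rewrite mem_head.
have {}ps_small : {in ps, forall q, mu q <= d}.
  by move=> q q_ps; apply: ps_small; rewrite in_cons q_ps orbT.
rewrite /Delta !IH ?subrr //; apply: le_lt_trans near_z.
- by rewrite lerDl (le_trans _ mup_le).
- rewrite (addrAC (mu z)) lerD2r (le_trans (mu_subadd _ _)) //.
  by rewrite lerD2l.
Qed.

Section LocalVanishing.
Variables (R : numFieldType) (X : lmodType R).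

Definition shear (k : nat) (p : X * X) : X := p.1 + p.2 *+ k.

Lemma shearD k : {morph shear k : u v / u + v}.
Proof. by move=> u v; rewrite /shear mulrnDl addrACA. Qed.

Fixpoint tilt (j : nat) (hs : seq X) : seq (X * X) :=
  if hs is h :: hs' then (h, - (j%:R^-1) *: h) :: tilt j.+1 hs' else [::].

Lemma size_tilt j hs : size (tilt j hs) = size hs.
Proof. by elim: hs j => [|h hs IH] j //=; rewrite IH. Qed.

Lemma map_shear0_tilt j hs : map (shear 0) (tilt j hs) = hs.
Proof. by elim: hs j => [|h hs IH] j //=; rewrite IH /shear mulr0n addr0. Qed.

Lemma shear_tilt_mem0 j k hs :
  (0 < j)%N -> (j <= k < j + size hs)%N -> 0 \in map (shear k) (tilt j hs).
Proof.
elim: hs j => [|h hs IH] j j_gt0 /andP[jk kj] /=.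
  by rewrite addn0 ltnNge jk in kj.
rewrite in_cons; case: ltngtP jk => // [jk _|<- _].
  by rewrite IH ?orbT //= jk addSnnS.
rewrite /shear /= scalerMnl mulNrn -(mulr_natr (j%:R : R)^-1 j) mulVf ?pnatr_eq0 -?lt0n //.
by rewrite scaleN1r subrr eqxx.
Qed.

Lemma tilt_small (nrm : X -> R) (d : R) j hs :
  is_norm nrm -> (0 < j)%N -> {in hs, forall h, nrm h < d} ->
  {in tilt j hs, forall p, nrm p.2 <= d}.
Proof.
move=> [nrm_ge0 _ nrmZ _]; elim: hs j => [|h hs IH] j j_gt0 hs_small p //=.
rewrite in_cons => /orP[/eqP -> /=|p_tilt].
  rewrite nrmZ normrN normfV normr_nat.
  apply: le_trans _ (ltW (hs_small h (mem_head _ _))).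
  by rewrite ler_piMl ?nrm_ge0 // invf_le1 ?ltr0n // ler1n.
by apply: (IH j.+1) => // h' h'_hs; apply: hs_small; rewrite in_cons h'_hs orbT.
Qed.

Lemma Deltas_eq0_small (nrm : X -> R) (Y : lmodType rat) (f : X -> Y)
    (s : nat) (eps : R) :
  is_norm nrm -> 0 < eps ->
  (forall x h : X, nrm h < eps -> DeltaPow h s f x = 0) ->
  forall (x : X) (hs : seq X), size hs = s ->
  {in hs, forall h, nrm h < eps / s.+1%:R} -> Deltas hs f x = 0.
Proof.
move=> nrmP eps_gt0 small0 x hs size_hs hs_small.
have [nrm_ge0 _ nrmZ nrm_tri] := nrmP.
have nrm0 : nrm 0 = 0 by rewrite -(scale0r (0 : X)) nrmZ normr0 mul0r.
pose c k : Y -> Y := fun y => ((-1 : rat) ^+ (s - k)) *: (y *+ 'C(s, k)).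
have cB k : {morph c k : u v / u - v} by move=> u v; rewrite /c mulrnBl scalerBr.
have F0 : Deltas (tilt 1 hs)
    (fun p => \sum_(k < s.+1) c k (f (shear k p))) (x, 0) = 0.
  apply: (@Deltas_eq0_near _ _ _ (fun p => nrm p.2) _ eps (eps / s.+1%:R)).
  - by move=> p; apply: nrm_ge0.
  - by move=> p q; apply: nrm_tri.
  - by move=> [y a] /= /(small0 y).
  - exact: tilt_small.
  rewrite /= nrm0 add0r size_tilt size_hs mulrCA gtr_pMr //.
  by rewrite ltr_pdivrMr ?ltr0n // mul1r ltr_nat.
move: F0; rewrite Deltas_sum big_ord_recl big1 ?addr0 => [|k _]; last first.
  rewrite Deltas_morph // Deltas_comp; last exact: shearD.
  rewrite Deltas_eq0_mem ?/c ?mul0rn ?scaler0 //.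
  by apply: shear_tilt_mem0; rewrite // size_hs /= ltnS ltn_ord.
rewrite (@Deltas_morph _ _ _ (c 0%N) _ (fun z => f (shear 0 z))) //.
rewrite Deltas_comp; last exact: shearD.
rewrite map_shear0_tilt /shear /= mulr0n addr0 /c subn0 bin0 mulr1n.
by move/eqP; rewrite scaler_eq0 signr_eq0 => /eqP.
Qed.

End LocalVanishing.

Section ArchimedeanExtension.
Variables (R : archiRealFieldType) (X : lmodType R) (nrm : X -> R).
Hypothesis nrmP : is_norm nrm.

Lemma small_fraction (del : R) (h : X) :
  0 < del -> exists2 u : X, nrm u < del & exists N, h = u *+ N.
Proof.
move=> del_gt0; have [nrm_ge0 _ nrmZ _] := nrmP.
pose N := (Num.Def.archi_bound (nrm h / del)).+1.
have N_neq0 : (N%:R : R) != 0 by rewrite pnatr_eq0.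
exists (N%:R^-1 *: h); last by exists N; rewrite scalerMnl -mulr_natr mulVf ?scale1r.
rewrite nrmZ normfV normr_nat mulrC ltr_pdivrMr ?ltr0n // -ltr_pdivrMl // mulrC.
apply: (lt_le_trans (archi_boundP (divr_ge0 (nrm_ge0 h) (ltW del_gt0)))).
by rewrite ler_nat.
Qed.

Lemma Deltas_eq0_everywhere (Y : zmodType) (g : X -> Y) (n : nat) (del : R) :
  0 < del ->
  (forall hs x, size hs = n -> {in hs, forall h, nrm h < del} -> Deltas hs g x = 0) ->
  forall hs x, size hs = n -> Deltas hs g x = 0.
Proof.
move=> del_gt0 small_vanish hs x size_hs.
suff vanish : forall hs1 hs2, size (hs1 ++ hs2) = n ->
    {in hs2, forall h, nrm h < del} -> forall x, Deltas (hs1 ++ hs2) g x = 0.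
  by rewrite -(cats0 hs); apply: vanish; rewrite ?cats0.
elim/last_ind=> [|hs1 h IH] hs2 size_n hs2_small y; first exact: small_vanish.
rewrite cat_rcons; have [u u_small [N ->]] := small_fraction h del_gt0.
apply: Deltas_mulrn => z; apply: IH.
  by rewrite -size_n !size_cat size_rcons /= addSnnS.
by move=> h'; rewrite in_cons => /orP[/eqP ->|/hs2_small].
Qed.

End ArchimedeanExtension.

Unset Implicit Arguments. Set Strict Implicit.

Theorem theorem5 (R : archiRealFieldType) (X : lmodType R) (nrm : X -> R)
    (Y : lmodType rat) (f : X -> Y) (s : nat) (eps : R) :
  is_norm nrm -> (1 <= s)%N -> 0 < eps ->
  (forall x h : X, nrm h < eps -> DeltaPow h s f x = 0) ->
  forall (x : X) (hs : seq X), size hs = s -> Deltas hs f x = 0.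
Proof.
move=> nrmP _ eps_gt0 small0 x hs size_hs.
have del_gt0 : 0 < eps / s.+1%:R by rewrite divr_gt0 ?ltr0n.
apply: (Deltas_eq0_everywhere nrmP del_gt0) size_hs => hs' y size_hs'.
exact: (Deltas_eq0_small nrmP eps_gt0 small0).
Qed.
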